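(* Let $\pi_2$ be the five-dimensional complex associative algebra with basis $e_1,\dots,e_5$ and nonzero products $e_1e_1=e_2$, $e_1e_2=e_2e_1=e_3$, $e_1e_4=e_4e_1=e_5$, $e_4e_4=e_5$ (all other products of basis elements are zero). A linear operator on $\pi_2$ is a local derivation if and only if its matrix has the form $$\begin{pmatrix} b_{11} & 0 & 0 & 0 & 0 \\ b_{21} & b_{22} & 0 & 0 & 0 \\ b_{31} & b_{32} & b_{33} & b_{34} & 0 \\ b_{41} & 0 & 0 & b_{41}+b_{11} & 0 \\ b_{51} & b_{52} & 0 & b_{54} & b_{22}+b_{52} \end{pmatrix}$$ with $b_{11},b_{21},b_{22},b_{31},b_{32},b_{33},b_{34},b_{41},b_{51},b_{52},b_{54}\in\mathbb{C}$.
   Context: The matrix of a linear operator $T$ is taken with respect to the basis $e_1,\dots,e_5$, with the $j$-th column giving the coordinates of $T(e_j)$. A derivation of an algebra $A$ is a linear map $D$ with $D(xy)=D(x)y+xD(y)$ for all $x,y\in A$. A linear map $\nabla:A\to A$ is a local derivation if for every $x\in A$ there is a derivation $D_x$ of $A$ (depending on $x$) with $\nabla(x)=D_x(x)$. *)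

(* The complex numbers are modelled as R[i] (real_closed's
   complex) for an arbitrary R : realType (a complete archimedean ordered
   field, i.e. the reals). *)
From mathcomp Require Import all_boot all_order all_algebra.
From mathcomp Require Export complex.
From mathcomp Require Export reals.
Set Implicit Arguments. Unset Strict Implicit. Unset Printing Implicit Defensive.
Import GRing.Theory.
Local Open Scope ring_scope.

(* Structure constants of pi_2 (0-indexed basis e_1..e_5 = indices 0..4):
   e_i e_j = \sum_k pi2_gamma i j k e_k.
   Nonzero products: e1e1=e2, e1e2=e2e1=e3, e1e4=e4e1=e5, e4e4=e5. *)
Definition pi2_gamma (F : nzRingType) (i j k : 'I_5) : F :=
  match nat_of_ord i, nat_of_ord j, nat_of_ord k with
  | 0, 0, 1 => 1
  | 0, 1, 2 => 1
  | 1, 0, 2 => 1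
  | 0, 3, 4 => 1
  | 3, 0, 4 => 1
  | 3, 3, 4 => 1
  | _, _, _ => 0
  end.

Definition pi2_mul (F : nzRingType) (x y : 'cV[F]_5) : 'cV[F]_5 :=
  \col_k \sum_(i < 5) \sum_(j < 5) x i 0 * y j 0 * pi2_gamma F i j k.

(* A linear operator is represented by its matrix M (j-th column =
   coordinates of T(e_j)), acting by x |-> M *m x. *)
Definition is_derivation (F : nzRingType) (D : 'M[F]_5) : Prop :=
  forall x y : 'cV[F]_5,
    D *m pi2_mul x y = pi2_mul (D *m x) y + pi2_mul x (D *m y).

Definition is_local_derivation (F : nzRingType) (N : 'M[F]_5) : Prop :=
  forall x : 'cV[F]_5, exists D : 'M[F]_5, is_derivation D /\ N *m x = D *m x.

Definition pi2_locder_form (F : nzRingType)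
  (b11 b21 b22 b31 b32 b33 b34 b41 b51 b52 b54 : F) : 'M[F]_5 :=
  \matrix_(i < 5, j < 5)
    match nat_of_ord i, nat_of_ord j with
    | 0, 0 => b11
    | 1, 0 => b21 | 1, 1 => b22
    | 2, 0 => b31 | 2, 1 => b32 | 2, 2 => b33 | 2, 3 => b34
    | 3, 0 => b41 | 3, 3 => b41 + b11
    | 4, 0 => b51 | 4, 1 => b52 | 4, 3 => b54 | 4, 4 => b22 + b52
    | _, _ => 0
    end.

(* A derivation D of pi_2 is determined by its values on the generators e1
   and e4: D e1 is arbitrary, and the relations e1 e4 = e4 e1 and
   e4 e4 = e1 e4 leave two free coordinates in D e4, giving the
   seven-parameter family pi2_der_mx.  Comparing a local derivation N with
   this family on e2, e3, e4, e5, e1 - e4 and e2 - e5 yields the zero pattern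
   and the two diagonal relations of pi2_locder_form.  Conversely, for N of
   that form and a vector v, the parameters of pi2_der_mx can be solved for
   N v = D v by cases on the first nonzero coordinate of v among v0, v3, v1
   (0-indexed); this divides by 2 and 3. *)
From mathcomp Require Import all_boot all_order all_algebra.
From mathcomp Require Import complex reals.
From mathcomp Require Import ring.
Import GRing.Theory Num.Theory.
Set Implicit Arguments. Unset Strict Implicit.
Local Open Scope ring_scope.

Local Notation i0 := (@Ordinal 5 0 isT).
Local Notation i1 := (@Ordinal 5 1 isT).
Local Notation i2 := (@Ordinal 5 2 isT).
Local Notation i3 := (@Ordinal 5 3 isT).
Local Notation i4 := (@Ordinal 5 4 isT).

Lemma big_ord5 (V : nmodType) (f : 'I_5 -> V) :
  \sum_(i < 5) f i = f i0 + f i1 + f i2 + f i3 + f i4.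
Proof.
rewrite !big_ord_recr big_ord0 /= add0r.
by congr (_ + _ + _ + _ + _); congr f; apply/val_inj.
Qed.

Section Columns.

Variable F : nzRingType.

Definition col5 (a b c d e : F) : 'cV[F]_5 :=
  \col_k match nat_of_ord k with 0 => a | 1 => b | 2 => c | 3 => d | _ => e end.

Lemma col5E (v : 'cV[F]_5) :
  v = col5 (v i0 0) (v i1 0) (v i2 0) (v i3 0) (v i4 0).
Proof.
apply/matrixP => k l; rewrite (ord1 l) !mxE.
by case: k => [[|[|[|[|[|k]]]]] Hk] //; rewrite (bool_irrelevance Hk isT).
Qed.

Lemma col5_inj (a b c d e a' b' c' d' e' : F) :
  col5 a b c d e = col5 a' b' c' d' e' ->
  [/\ a = a', b = b', c = c', d = d' & e = e'].
Proof.
move/matrixP => eq_ae.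
by split; [move: (eq_ae i0 0) | move: (eq_ae i1 0) | move: (eq_ae i2 0)
         | move: (eq_ae i3 0) | move: (eq_ae i4 0)]; rewrite !mxE.
Qed.

Lemma add_col5 (a b c d e a' b' c' d' e' : F) :
  col5 a b c d e + col5 a' b' c' d' e' =
  col5 (a + a') (b + b') (c + c') (d + d') (e + e').
Proof. by apply/matrixP => k l; rewrite !mxE; case: k => [[|[|[|[|[|k]]]]] Hk]. Qed.

Lemma mulmx_col5 (M : 'M[F]_5) (a b c d e : F) :
  M *m col5 a b c d e =
  col5 (M i0 i0 * a + M i0 i1 * b + M i0 i2 * c + M i0 i3 * d + M i0 i4 * e)
       (M i1 i0 * a + M i1 i1 * b + M i1 i2 * c + M i1 i3 * d + M i1 i4 * e)
       (M i2 i0 * a + M i2 i1 * b + M i2 i2 * c + M i2 i3 * d + M i2 i4 * e)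
       (M i3 i0 * a + M i3 i1 * b + M i3 i2 * c + M i3 i3 * d + M i3 i4 * e)
       (M i4 i0 * a + M i4 i1 * b + M i4 i2 * c + M i4 i3 * d + M i4 i4 * e).
Proof.
apply/matrixP => k l; rewrite !mxE big_ord5 !mxE /=.
by case: k => [[|[|[|[|[|k]]]]] Hk] //; rewrite (bool_irrelevance Hk isT).
Qed.

End Columns.

Section Derivations.

Variable F : comNzRingType.

Lemma pi2_mul_col5 (a b c d e a' b' c' d' e' : F) :
  pi2_mul (col5 a b c d e) (col5 a' b' c' d' e') =
  col5 0 (a * a') (a * b' + b * a') 0 (a * d' + d * a' + d * d').
Proof.
apply/matrixP => k l; rewrite !mxE !big_ord5 !mxE /pi2_gamma /=.
by case: k => [[|[|[|[|[|k]]]]] Hk] //=; ring.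
Qed.

Definition pi2_der_mx (x0 x1 x2 x3 x4 y2 y4 : F) : 'M[F]_5 :=
  \matrix_(i < 5, j < 5)
    match nat_of_ord i, nat_of_ord j with
    | 0, 0 => x0
    | 1, 0 => x1 | 1, 1 => x0 *+ 2
    | 2, 0 => x2 | 2, 1 => x1 *+ 2 | 2, 2 => x0 *+ 3 | 2, 3 => y2
    | 3, 0 => x3 | 3, 3 => x0 + x3
    | 4, 0 => x4 | 4, 1 => x3 *+ 2 | 4, 3 => y4 | 4, 4 => (x0 + x3) *+ 2
    | _, _ => 0
    end.

Lemma pi2_der_mx_col5 (x0 x1 x2 x3 x4 y2 y4 a b c d e : F) :
  pi2_der_mx x0 x1 x2 x3 x4 y2 y4 *m col5 a b c d e =
  col5 (x0 * a) (x1 * a + x0 * b *+ 2)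
       (x2 * a + x1 * b *+ 2 + x0 * c *+ 3 + y2 * d) (x3 * a + (x0 + x3) * d)
       (x4 * a + x3 * b *+ 2 + y4 * d + (x0 + x3) * e *+ 2).
Proof. by rewrite mulmx_col5 !mxE /=; congr col5; ring. Qed.

Lemma pi2_der_mx_is_derivation (x0 x1 x2 x3 x4 y2 y4 : F) :
  is_derivation (pi2_der_mx x0 x1 x2 x3 x4 y2 y4).
Proof.
move=> x y; rewrite (col5E x) (col5E y).
by rewrite !pi2_mul_col5 !pi2_der_mx_col5 !pi2_mul_col5 add_col5; congr col5; ring.
Qed.

Lemma pi2_derivation_form (D : 'M[F]_5) : is_derivation D ->
  D = pi2_der_mx (D i0 i0) (D i1 i0) (D i2 i0) (D i3 i0) (D i4 i0) (D i2 i3) (D i4 i3).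
Proof.
move=> Dder.
move: (Dder (col5 1 0 0 0 0) (col5 1 0 0 0 0)) (Dder (col5 1 0 0 0 0) (col5 0 1 0 0 0))
  (Dder (col5 0 0 0 1 0) (col5 0 0 0 1 0)) (Dder (col5 1 0 0 0 0) (col5 0 0 0 1 0)).
rewrite !pi2_mul_col5 !mulmx_col5 !pi2_mul_col5 !add_col5.
rewrite !(mulr0, mul0r, mulr1, mul1r, addr0, add0r).
move=> /col5_inj[a0 a1 a2 a3 a4] /col5_inj[b0 b1 b2 b3 b4]
       /col5_inj[c0 c1 c2 c3 c4] /col5_inj[d0 d1 d2 d3 d4].
have D03 : D i0 i3 = 0 by rewrite -d1 c1.
have D13 : D i1 i3 = 0 by rewrite -d2 c2.
have D33 : D i3 i3 = D i0 i0 + D i3 i0.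
  by apply: (@addIr _ (D i3 i3)); rewrite -d4 c4 D03 add0r.
apply/matrixP => i j; rewrite mxE.
case: i => [[|[|[|[|[|i]]]]] Hi] //; rewrite (bool_irrelevance Hi isT) /=;
case: j => [[|[|[|[|[|j]]]]] Hj] //; rewrite (bool_irrelevance Hj isT) /=;
rewrite ?b0 ?b1 ?b2 ?b3 ?b4 ?a0 ?a1 ?a2 ?a3 ?a4 ?c0 ?c1 ?c2 ?c3 ?d4 ?D03 ?D13 ?D33 //;
ring.
Qed.

Lemma pi2_local_derivationP (N : 'M[F]_5) :
  is_local_derivation N <->
  forall v : 'cV[F]_5, exists x0 x1 x2 x3 x4 y2 y4 : F,
    N *m v = pi2_der_mx x0 x1 x2 x3 x4 y2 y4 *m v.
Proof.
split=> [Nloc v | Nv v].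
  have [D [Dder ->]] := Nloc v.
  by rewrite (pi2_derivation_form Dder); do 7!eexists.
have [x0 [x1 [x2 [x3 [x4 [y2 [y4 ->]]]]]]] := Nv v.
by exists (pi2_der_mx x0 x1 x2 x3 x4 y2 y4); split; first exact: pi2_der_mx_is_derivation.
Qed.

Lemma pi2_local_derivation_form (N : 'M[F]_5) :
  is_local_derivation N ->
  exists b11 b21 b22 b31 b32 b33 b34 b41 b51 b52 b54 : F,
    N = pi2_locder_form b11 b21 b22 b31 b32 b33 b34 b41 b51 b52 b54.
Proof.
move=> /pi2_local_derivationP Nloc.
have [x0 [x1 [x2 [x3 [x4 [y2 [y4]]]]]]] := Nloc (col5 0 1 0 0 0).
rewrite mulmx_col5 pi2_der_mx_col5 !(mulr0, mulr1, addr0, add0r, mul0rn).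
move=> /col5_inj[N01 _ _ N31 _] {x0 x1 x2 x3 x4 y2 y4}.
have [x0 [x1 [x2 [x3 [x4 [y2 [y4]]]]]]] := Nloc (col5 0 0 1 0 0).
rewrite mulmx_col5 pi2_der_mx_col5 !(mulr0, mulr1, addr0, add0r, mul0rn).
move=> /col5_inj[N02 N12 _ N32 N42] {x0 x1 x2 x3 x4 y2 y4}.
have [x0 [x1 [x2 [x3 [x4 [y2 [y4]]]]]]] := Nloc (col5 0 0 0 1 0).
rewrite mulmx_col5 pi2_der_mx_col5 !(mulr0, mulr1, addr0, add0r, mul0rn).
move=> /col5_inj[N03 N13 _ _ _] {x0 x1 x2 x3 x4 y2 y4}.
have [x0 [x1 [x2 [x3 [x4 [y2 [y4]]]]]]] := Nloc (col5 0 0 0 0 1).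
rewrite mulmx_col5 pi2_der_mx_col5 !(mulr0, mulr1, addr0, add0r, mul0rn).
move=> /col5_inj[N04 N14 N24 N34 _] {x0 x1 x2 x3 x4 y2 y4}.
have N33 : N i3 i3 = N i3 i0 + N i0 i0.
  have [x0 [x1 [x2 [x3 [x4 [y2 [y4]]]]]]] := Nloc (col5 1 0 0 (-1) 0).
  rewrite mulmx_col5 pi2_der_mx_col5 !(mulr0, mulr1, mulrN1, addr0, add0r, mul0rn).
  rewrite N03 subr0 => /col5_inj[-> _ _ N3 _].
  by rewrite -[LHS](subKr (N i3 i0)) N3; ring.
have N44 : N i4 i4 = N i1 i1 + N i4 i1.
  have [x0 [x1 [x2 [x3 [x4 [y2 [y4]]]]]]] := Nloc (col5 0 1 0 0 (-1)).
  rewrite mulmx_col5 pi2_der_mx_col5 !(mulr0, mulr1, mulrN1, addr0, add0r, mul0rn).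
  rewrite N14 subr0 => /col5_inj[_ -> _ _ N4].
  by rewrite -[LHS](subKr (N i4 i1)) N4; ring.
exists (N i0 i0), (N i1 i0), (N i1 i1), (N i2 i0), (N i2 i1), (N i2 i2), (N i2 i3),
  (N i3 i0), (N i4 i0), (N i4 i1), (N i4 i3).
apply/matrixP => i j; rewrite mxE.
case: i => [[|[|[|[|[|i]]]]] Hi] //; rewrite (bool_irrelevance Hi isT) /=;
case: j => [[|[|[|[|[|j]]]]] Hj] //; rewrite (bool_irrelevance Hj isT) /=;
by rewrite ?N01 ?N31 ?N02 ?N12 ?N32 ?N42 ?N03 ?N13 ?N04 ?N14 ?N24 ?N34 ?N33 ?N44.
Qed.

Lemma pi2_locder_form_col5
    (b11 b21 b22 b31 b32 b33 b34 b41 b51 b52 b54 a b c d e : F) :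
  pi2_locder_form b11 b21 b22 b31 b32 b33 b34 b41 b51 b52 b54 *m col5 a b c d e =
  col5 (b11 * a) (b21 * a + b22 * b) (b31 * a + b32 * b + b33 * c + b34 * d)
       (b41 * a + (b41 + b11) * d) (b51 * a + b52 * b + b54 * d + (b22 + b52) * e).
Proof. by rewrite mulmx_col5 !mxE /=; congr col5; ring. Qed.

End Derivations.

Lemma pi2_locder_form_is_local_derivation (F : fieldType)
    (two_neq0 : 2 != 0 :> F) (three_neq0 : 3 != 0 :> F)
    (b11 b21 b22 b31 b32 b33 b34 b41 b51 b52 b54 : F) :
  is_local_derivation (pi2_locder_form b11 b21 b22 b31 b32 b33 b34 b41 b51 b52 b54).
Proof.
apply/pi2_local_derivationP => v; rewrite (col5E v) pi2_locder_form_col5.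
move: (v i0 0) (v i1 0) (v i2 0) (v i3 0) (v i4 0) => v0 v1 v2 v3 v4.
have [-> | v0_neq0] := eqVneq v0 0; last first.
  (* Row 0 forces x0 = b11, then row 3 forces x3 = b41; rows 1, 2, 4 are
     solved for x1, x2, x4. *)
  pose x1 := (b21 * v0 + b22 * v1 - b11 * v1 *+ 2) / v0.
  exists b11, x1,
    ((b31 * v0 + b32 * v1 + b33 * v2 + b34 * v3 - x1 * v1 *+ 2 - b11 * v2 *+ 3) / v0),
    b41,
    ((b51 * v0 + b52 * v1 + b54 * v3 + (b22 + b52) * v4 - b41 * v1 *+ 2
      - (b11 + b41) * v4 *+ 2) / v0), 0, 0.
  by rewrite pi2_der_mx_col5 /x1; congr col5; field.
have [-> | v3_neq0] := eqVneq v3 0; last first.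
  pose x0 := b22 / 2; pose x3 := b41 + b11 - x0.
  exists x0, 0, 0, x3, 0, ((b32 * v1 + b33 * v2 + b34 * v3 - x0 * v2 *+ 3) / v3),
    ((b52 * v1 + b54 * v3 + (b22 + b52) * v4 - x3 * v1 *+ 2 - (b41 + b11) * v4 *+ 2) / v3).
  by rewrite pi2_der_mx_col5 /x3 /x0; congr col5; field; rewrite ?two_neq0 ?v3_neq0.
have [-> | v1_neq0] := eqVneq v1 0; last first.
  exists (b22 / 2), ((b32 * v1 + b33 * v2 - b22 / 2 * v2 *+ 3) / (2 * v1)), 0,
    (b52 / 2), 0, 0, 0.
  by rewrite pi2_der_mx_col5; congr col5; field; rewrite ?two_neq0 ?three_neq0 ?v1_neq0.
exists (b33 / 3), 0, 0, ((b22 + b52) / 2 - b33 / 3), 0, 0, 0.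
by rewrite pi2_der_mx_col5; congr col5; field; rewrite ?two_neq0 ?three_neq0.
Qed.

Theorem theorem5p2 (R : realType) (N : 'M[R[i]]_5) :
  is_local_derivation N <->
  exists b11 b21 b22 b31 b32 b33 b34 b41 b51 b52 b54 : R[i],
    N = pi2_locder_form b11 b21 b22 b31 b32 b33 b34 b41 b51 b52 b54.
Proof.
split; first exact: pi2_local_derivation_form.
case=> b11 [b21 [b22 [b31 [b32 [b33 [b34 [b41 [b51 [b52 [b54 ->]]]]]]]]]].
by apply: pi2_locder_form_is_local_derivation; rewrite pnatr_eq0.
Qed.
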